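(* Let $\gamma$ be a generator of $\mathbb{F}_q^*$. Let $Q(x,y_0,\dots,y_{s-1})=A(x)+\sum_{i=0}^{s-1}A_i(x)y_i$ with $A,A_0,\dots,A_{s-1}\in\mathbb{F}_q[x]$, not all $A_i$ zero. Then the set of all $f\in\mathbb{F}_q[x]$ of degree less than $q-1$ such that $Q\bigl(x,f(x),f(\gamma x),\dots,f(\gamma^{s-1}x)\bigr)=0$ is either empty or an $\mathbb{F}_q$-affine subspace of $\mathbb{F}_q[x]$ of dimension at most $s-1$. *)

From HB Require Import structures.
From mathcomp Require Import all_boot all_order all_algebra all_field.
Set Implicit Arguments. Unset Strict Implicit. Unset Printing Implicit Defensive.
Import GRing.Theory.
Local Open Scope ring_scope.

(* Q(x, f(x), f(gamma x), ..., f(gamma^(s-1) x)) = A + sum_i A_i * f(gamma^i x),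
   where f(gamma^i x) is the composition f \Po (gamma^i * 'X). *)
Definition Qeval (F : fieldType) (s : nat) (A : {poly F}) (As : 'I_s -> {poly F})
  (gamma : F) (f : {poly F}) : {poly F} :=
  A + \sum_(i < s) As i * (f \Po (gamma ^+ i *: 'X)).

Definition solution (F : finFieldType) (s : nat) (A : {poly F})
  (As : 'I_s -> {poly F}) (gamma : F) (f : {poly F}) : Prop :=
  (size f <= #|F|.-1)%N /\ Qeval A As gamma f = 0.

(* The map  T f = sum_i A_i(x) f(gamma^i x)  is F-linear, so (once a solution
   f0 exists) the solutions are f0 + (kernel of T on polynomials of size
   <= n = q - 1); by finiteness of F this kernel is a subspace K of the
   coordinate space 'rV_n.  Writing B_l(y) = sum_i (A_i)_l y^i, the m-th
   coefficient of T f is sum_l B_l(gamma^(m-l)) f_(m-l).  Let l0 be the least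
   index with B_l0 <> 0; if f is in the kernel and j is its lowest nonzero
   coefficient, then the coefficient j + l0 of T f is B_l0(gamma^j) f_j, so
   B_l0(gamma^j) = 0.  Hence a kernel element vanishing at all the indices
   j < n with B_l0(gamma^j) = 0 is zero, and \dim K is at most the number of
   such j.  As gamma is a primitive (q-1)-th root of unity, the gamma^j are
   distinct, so this number is less than size B_l0 <= s. *)

From HB Require Import structures.
From mathcomp Require Import all_boot all_order all_algebra all_field.
From mathcomp Require Import zify.
From Stdlib Require Import Classical_Prop.
Import GRing.Theory.
Set Implicit Arguments. Unset Strict Implicit. Unset Printing Implicit Defensive.
Local Open Scope ring_scope.

(* Over a finite field, the kernel of a linear map on a coordinate space is a
   subspace: it is spanned by the (finitely many) vectors it contains. *)
Lemma linear_kernel_subspace (F : finFieldType) (n : nat) (W : lmodType F)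
    (phi : {linear 'rV[F]_n -> W}) :
  exists K : {vspace 'rV[F]_n}, forall r, (r \in K) = (phi r == 0).
Proof.
pose X := [seq r <- enum 'rV[F]_n | phi r == 0].
exists <<X>>%VS => r; apply/idP/idP => [rK | /eqP phir0]; last first.
  by apply: memv_span; rewrite mem_filter mem_enum andbT phir0 eqxx.
rewrite [r](coord_span (X := in_tuple X) rK) linear_sum big1 //= => i _.
have : (in_tuple X)`_i \in X by apply: mem_nth.
by rewrite mem_filter => /andP[/eqP phiX0 _]; rewrite linearZ /= phiX0 scaler0.
Qed.

(* If the only vector of K vanishing on the coordinates in S is 0, then the
   projection onto these coordinates is injective on K, so \dim K <= #|S|. *)
Lemma dimv_le_card_coords (F : fieldType) (n : nat) (K : {vspace 'rV[F]_n})
    (S : {set 'I_n}) :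
  (forall r, r \in K -> (forall j, j \in S -> r 0 j = 0) -> r = 0) ->
  (\dim K <= #|S|)%N.
Proof.
move=> injS.
pose P : 'M[F]_(n, #|S|) := \matrix_(j, t) (j == enum_val t)%:R.
have projE (r : 'rV_n) t : (r *m P) 0 t = r 0 (enum_val t).
  rewrite !mxE (bigD1 (enum_val t)) //= !mxE eqxx mulr1 big1 ?addr0 // => j jt.
  by rewrite mxE (negbTE jt) mulr0.
rewrite -(limg_dim_eq (f := linfun (mulmxr P))).
  by rewrite (leq_trans (dimvS (subvf _))) // dimvf dim_matrix mul1r.
apply/eqP; rewrite -subv0; apply/subvP => r.
rewrite memv_cap memv_ker memv0 lfunE /= => /andP[rK /eqP Pr0].
apply/eqP/injS => // j jS.
by rewrite -(enum_rankK_in jS jS) -projE Pr0 mxE.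
Qed.

Lemma size_rVpoly (F : fieldType) (n : nat) (v : 'rV[F]_n) : (size (rVpoly v) <= n)%N.
Proof. exact: size_poly. Qed.

Lemma affine_solution_set (F : fieldType) (n : nat)
    (L : {linear {poly F} -> {poly F}}) (K : {vspace 'rV[F]_n})
    (memK : forall r, (r \in K) = (L (rVpoly r) == 0))
    (A f0 : {poly F}) (size_f0 : (size f0 <= n)%N) (sol_f0 : A + L f0 = 0)
    (f : {poly F}) :
  (size f <= n)%N /\ A + L f = 0 <->
  exists c : 'I_(\dim K) -> F,
    f = f0 + \sum_(i < \dim K) c i *: rVpoly (vbasis K)`_i.
Proof.
have L_f0 : L f0 = - A by apply/eqP; rewrite -addr_eq0 addrC sol_f0.
split=> [[size_f sol_f] | [c ->]].
  have size_df : (size (f - f0)%R <= n)%N.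
    by rewrite (leq_trans (size_polyD _ _)) // size_polyN geq_max size_f.
  have dfK : poly_rV (f - f0)%R \in K.
    rewrite memK poly_rV_K // linearB /= L_f0.
    by rewrite subr_eq0 -addr_eq0 addrC sol_f.
  exists (fun i => coord (vbasis K) i (poly_rV (f - f0)%R)).
  rewrite -[LHS](subrK f0) addrC; congr (_ + _).
  rewrite -{1}(poly_rV_K size_df) {1}(coord_vbasis dfK) linear_sum.
  by apply: eq_bigr => i _; rewrite linearZ.
pose w := \sum_(i < \dim K) c i *: (vbasis K)`_i.
have -> : \sum_(i < \dim K) c i *: rVpoly (vbasis K)`_i = rVpoly w.
  by rewrite linear_sum; apply: eq_bigr => i _; rewrite linearZ.
have wK : w \in K.
  by apply: memv_suml => i _; rewrite memvZ // vbasis_mem // mem_nth ?size_tuple.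
have Lw0 : L (rVpoly w) = 0 by apply/eqP; rewrite -memK.
rewrite linearD /= Lw0 addr0; split=> //.
by rewrite (leq_trans (size_polyD _ _)) // geq_max size_f0 size_rVpoly.
Qed.

Lemma coef_comp_scaleX (R : comNzRingType) (c : R) (p : {poly R}) (t : nat) :
  (p \Po (c *: 'X))`_t = c ^+ t * p`_t.
Proof.
rewrite coef_comp_poly.
under eq_bigr => i _ do rewrite exprZn coefZ coefXn mulrA.
have [t_lt | t_ge] := ltnP t (size p); last first.
  rewrite nth_default // mulr0 big1 // => i _.
  by rewrite gtn_eqF ?mulr0 // (leq_trans (ltn_ord i) t_ge).
rewrite (bigD1 (Ordinal t_lt)) //= eqxx mulr1 mulrC big1 ?addr0 // => i.
by rewrite -val_eqE /= eq_sym => /negbTE ->; rewrite mulr0.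
Qed.

Section TwistedOperator.
Variables (F : fieldType) (s : nat) (As : 'I_s -> {poly F}) (g : F).

Definition twisted (f : {poly F}) : {poly F} :=
  \sum_(i < s) As i * (f \Po (g ^+ i *: 'X)).

Fact twisted_is_semilinear : semilinear twisted.
Proof.
split=> [a u | u v]; rewrite /twisted.
  by rewrite scaler_sumr; apply: eq_bigr => i _; rewrite linearZ scalerAr.
by rewrite -big_split; apply: eq_bigr => i _; rewrite linearD mulrDr.
Qed.
HB.instance Definition _ :=
  GRing.isSemilinear.Build F {poly F} {poly F} _ twisted twisted_is_semilinear.

Definition slice (l : nat) : {poly F} := \sum_(i < s) (As i)`_l *: 'X^i.

Lemma size_slice (l : nat) : (size (slice l) <= s)%N.
Proof.
rewrite /slice (leq_trans (size_sum _ _ _)) //; apply/bigmax_leqP => i _.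
by rewrite (leq_trans (size_scale_leq _ _)) // size_polyXn.
Qed.

Lemma coef_slice (l : nat) (i : 'I_s) : (slice l)`_i = (As i)`_l.
Proof.
rewrite /slice coef_sum (bigD1 i) //= coefZ coefXn eqxx mulr1 big1 ?addr0 //.
by move=> j ji; rewrite coefZ coefXn eq_sym val_eqE (negbTE ji) mulr0.
Qed.

Lemma slice_lead_neq0 (i : 'I_s) : As i != 0 -> slice (size (As i)).-1 != 0.
Proof.
move=> Ai_neq0; apply: contraNneq Ai_neq0 => slice0.
by rewrite -lead_coef_eq0 /lead_coef -coef_slice slice0 coef0.
Qed.
Lemma coef_twisted (f : {poly F}) (m : nat) :
  (twisted f)`_m = \sum_(l < m.+1) (slice l).[g ^+ (m - l)] * f`_(m - l).
Proof.
rewrite /twisted coef_sum; under eq_bigr do rewrite coefM.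
rewrite exchange_big /=; apply: eq_bigr => l _.
rewrite /slice horner_sum mulr_suml; apply: eq_bigr => i _.
by rewrite hornerZ hornerXn coef_comp_scaleX exprAC mulrA.
Qed.

Lemma coef_twisted_lowest (l0 : nat) (below_l0 : forall l, (l < l0)%N -> slice l = 0)
    (f : {poly F}) (j : nat) (below_j : forall k, (k < j)%N -> f`_k = 0) :
  (twisted f)`_(j + l0) = (slice l0).[g ^+ j] * f`_j.
Proof.
have l0_lt : (l0 < (j + l0).+1)%N by lia.
rewrite coef_twisted (bigD1 (Ordinal l0_lt)) //= addnK big1 ?addr0 // => l.
rewrite -val_eqE /= => l_neq_l0; have [l_lt | l_ge] := ltnP l l0.
  by rewrite below_l0 // horner0 mul0r.
by rewrite below_j ?mulr0 //; have := ltn_ord l; lia.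
Qed.

(* Hence a kernel element of size <= n whose coefficients vanish at every
   j < n with B_l0(g^j) = 0 is zero: its lowest nonzero coefficient would
   sit at such a j. *)
Lemma twisted_kernel_eq0 (l0 : nat) (below_l0 : forall l, (l < l0)%N -> slice l = 0)
    (n : nat) (f : {poly F}) (size_f : (size f <= n)%N) (ker_f : twisted f = 0)
    (vanish_at_roots : forall j, (j < n)%N -> root (slice l0) (g ^+ j) -> f`_j = 0) :
  f = 0.
Proof.
apply/polyP => j; rewrite coef0; elim/ltn_ind: j => j below_j.
have [j_lt | j_ge] := ltnP j n; last by rewrite nth_default // (leq_trans size_f).
have := coef_twisted_lowest below_l0 below_j.
rewrite ker_f coef0 => /esym/eqP; rewrite mulf_eq0 => /orP[root_j | /eqP //].
exact: vanish_at_roots.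
Qed.
End TwistedOperator.

(* The powers g^j, j < n, of a primitive n-th root are pairwise distinct, so
   a nonzero polynomial vanishes at fewer than size p of them. *)
Lemma card_root_powers (F : fieldType) (n : nat) (g : F)
    (prim_g : n.-primitive_root g) (p : {poly F}) (p_neq0 : p != 0) :
  (#|[set j : 'I_n | root p (g ^+ j)]| < size p)%N.
Proof.
rewrite cardE -(size_map (fun j : 'I_n => g ^+ j)); apply: max_poly_roots p_neq0 _ _.
  by apply/allP => _ /mapP[j jS ->]; rewrite mem_enum inE in jS.
rewrite map_inj_in_uniq ?enum_uniq // => i j _ _ /eqP.
by rewrite (eq_prim_root_expr prim_g) !modn_small // => /eqP/val_inj.
Qed.

Lemma dim_twisted_kernel (F : fieldType) (n : nat) (g : F)
    (prim_g : n.-primitive_root g) (s : nat) (As : 'I_s -> {poly F})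
    (As_neq0 : exists i : 'I_s, As i != 0) (K : {vspace 'rV[F]_n})
    (memK : forall r, (r \in K) = (twisted As g (rVpoly r) == 0)) :
  (\dim K <= s.-1)%N.
Proof.
have ex_slice : exists l, slice As l != 0.
  by case: As_neq0 => i Ai_neq0; exists (size (As i)).-1; exact: slice_lead_neq0.
case: (ex_minnP ex_slice) => l0 slice_l0 min_l0.
have below_l0 l : (l < l0)%N -> slice As l = 0.
  by move=> l_lt; apply/eqP; apply: contraTT l_lt => /min_l0; rewrite leqNgt.
have := card_root_powers prim_g slice_l0; have := size_slice As l0.
set S := [set j : 'I_n | root (slice As l0) (g ^+ j)].
suff : (\dim K <= #|S|)%N by lia.
apply: dimv_le_card_coords => r rK r_vanish.
apply: (can_inj rVpolyK); rewrite linear0.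
apply: (twisted_kernel_eq0 (g := g) below_l0 (size_rVpoly r)).
  by apply/eqP; rewrite -memK.
by move=> j j_lt root_j; rewrite (coef_rVpoly_ord r (Ordinal j_lt)) r_vanish // inE.
Qed.

Unset Implicit Arguments.

Theorem lemmaE8 (F : finFieldType) (gamma : F)
  (hgamma : (#|F|.-1).-primitive_root gamma)
  (s : nat) (A : {poly F}) (As : 'I_s -> {poly F})
  (hAs : exists i : 'I_s, As i != 0) :
  (forall f : {poly F}, ~ solution A As gamma f) \/
  exists (f0 : {poly F}) (k : nat) (b : 'I_k -> {poly F}),
    (k <= s.-1)%N /\
    forall f : {poly F},
      solution A As gamma f <->
      exists c : 'I_k -> F, f = f0 + \sum_(i < k) c i *: b i.
Proof.
have [[f0 [size_f0 sol_f0]] | no_sol] := classic (exists f, solution A As gamma f);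
  last by left => f sol_f; apply: no_sol; exists f.
right.
have [K memK] := linear_kernel_subspace (twisted As gamma \o @rVpoly F #|F|.-1).
exists f0, (\dim K), (fun i => rVpoly (vbasis K)`_i); split.
  by apply: (dim_twisted_kernel hgamma hAs) => r; rewrite memK.
move=> f; exact: (affine_solution_set (L := twisted As gamma)).
Qed.
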